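(* Consider a linear Gaussian covariance model given by $\mathcal G=(G_0,\dots,G_r)$ and suppose the sample covariance matrix satisfies $S_n\succ 0$. Then the log-likelihood $\ell:\Theta_{\mathcal G}\to\mathbb{R}$, $\ell(v)=-\frac n2\log\det\Sigma_v-\frac n2\mathrm{tr}(S_n\Sigma_v^{-1})$, is strictly concave on the convex set $\Delta_{2S_n}=\{v\in\Theta_{\mathcal G}: 0\prec\Sigma_v\prec 2S_n\}$. In particular, maximizing $\ell$ over $\Delta_{2S_n}$ is a convex optimization problem.
   Context: $\mathbb{S}^p$ denotes real symmetric $p\times p$ matrices with inner product $\langle A,B\rangle=\mathrm{tr}(AB)$, $\mathbb{S}^p_{\succ0}$ the positive definite ones, and $A\succ B$ means $A-B$ is positive definite. A linear Gaussian covariance model is specified by $G_0,G_1,\dots,G_r\in\mathbb{S}^p$ with $G_1,\dots,G_r$ linearly independent and $\mathrm{tr}(G_0G_i)=0$ for $i=1,\dots,r$; for $v\in\mathbb{R}^r$ put $\Sigma_v=G_0+\sum_{i=1}^r v_iG_i$, and the parameter space is $\Theta_{\mathcal G}=\{v\in\mathbb{R}^r:\Sigma_v\in\mathbb{S}^p_{\succ0}\}$ (assumed nonempty). Given observations $X_1,\dots,X_n\in\mathbb{R}^p$, $\bar X=\frac1n\sum X_i$ and $S_n=\frac1n\sum_{i=1}^n(X_i-\bar X)(X_i-\bar X)^T$. *)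

From Stdlib Require Import Reals ClassicalEpsilon FunctionalExtensionality.
From HB Require Import structures.
From mathcomp Require Import all_boot all_order all_algebra.

Set Implicit Arguments.
Unset Strict Implicit.
Unset Printing Implicit Defensive.

Definition Req_bool (x y : R) : bool := if Req_EM_T x y then true else false.

Lemma Req_boolP : Equality.axiom Req_bool.
Proof. move=> x y; rewrite /Req_bool; case: Req_EM_T => h; constructor => //. Qed.

HB.instance Definition _ := hasDecEq.Build R Req_boolP.

Definition R_find (P : pred R) (n : nat) : option R :=
  match excluded_middle_informative (exists x, P x) with
  | left h => Some (proj1_sig (constructive_indefinite_description _ h))
  | right _ => None
  end.

Lemma R_find_correct P n x : R_find P n = Some x -> P x.
Proof.
rewrite /R_find; case: excluded_middle_informative => // h [<-].
exact: (proj2_sig (constructive_indefinite_description _ h)).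
Qed.

Lemma R_find_complete (P : pred R) : (exists x, P x) -> exists n, R_find P n.
Proof. move=> h; exists 0%N; rewrite /R_find; case: excluded_middle_informative. by []. by []. Qed.

Lemma R_find_ext (P Q : pred R) : P =1 Q -> R_find P =1 R_find Q.
Proof. by move=> /functional_extensionality ->. Qed.

HB.instance Definition _ := hasChoice.Build R R_find_correct R_find_complete R_find_ext.

Lemma R_addA : associative Rplus. Proof. move=> x y z; by rewrite Rplus_assoc. Qed.
Lemma R_addC : commutative Rplus. Proof. exact: Rplus_comm. Qed.
Lemma R_add0 : left_id R0 Rplus. Proof. exact: Rplus_0_l. Qed.
Lemma R_addN : left_inverse R0 Ropp Rplus. Proof. exact: Rplus_opp_l. Qed.

HB.instance Definition _ := GRing.isZmodule.Build R R_addA R_addC R_add0 R_addN.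

Lemma R_mulA : associative Rmult. Proof. move=> x y z; by rewrite Rmult_assoc. Qed.
Lemma R_mulC : commutative Rmult. Proof. exact: Rmult_comm. Qed.
Lemma R_mul1 : left_id R1 Rmult. Proof. exact: Rmult_1_l. Qed.
Lemma R_mulDl : left_distributive Rmult Rplus.
Proof. move=> x y z; exact: Rmult_plus_distr_r. Qed.
Lemma R_one_neq0 : R1 != R0.
Proof. by apply/eqP; exact: R1_neq_R0. Qed.

HB.instance Definition _ :=
  GRing.Zmodule_isComNzRing.Build R R_mulA R_mulC R_mul1 R_mulDl R_one_neq0.

Lemma R_mulVf (x : R) : x != 0%R -> Rmult (Rinv x) x = R1.
Proof. by move=> /eqP h; apply: Rinv_l. Qed.
Lemma R_inv0 : Rinv R0 = R0. Proof. exact: Rinv_0. Qed.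

HB.instance Definition _ := GRing.ComNzRing_isField.Build R R_mulVf R_inv0.

Local Open Scope ring_scope.

Definition quadform (p : nat) (A : 'M[R]_p) (x : 'cV[R]_p) : R :=
  (x^T *m A *m x) 0 0.

Definition posdef (p : nat) (A : 'M[R]_p) : Prop :=
  A^T = A /\ forall x : 'cV[R]_p, x <> 0 -> Rlt 0%R (quadform A x).

Definition loewner_lt (p : nat) (A B : 'M[R]_p) : Prop := posdef (B - A).

Definition Sigma (p r : nat) (G0 : 'M[R]_p) (G : 'I_r -> 'M[R]_p)
  (v : 'I_r -> R) : 'M[R]_p :=
  G0 + \sum_(i < r) v i *: G i.

Definition Theta (p r : nat) (G0 : 'M[R]_p) (G : 'I_r -> 'M[R]_p)
  (v : 'I_r -> R) : Prop := posdef (Sigma G0 G v).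

Definition Delta2S (p r : nat) (G0 : 'M[R]_p) (G : 'I_r -> 'M[R]_p)
  (S : 'M[R]_p) (v : 'I_r -> R) : Prop :=
  Theta G0 G v /\ loewner_lt 0 (Sigma G0 G v) /\
  loewner_lt (Sigma G0 G v) (2%:R *: S).

Definition sample_mean (p n : nat) (X : 'I_n -> 'cV[R]_p) : 'cV[R]_p :=
  (n%:R)^-1 *: \sum_(i < n) X i.

Definition sample_cov (p n : nat) (X : 'I_n -> 'cV[R]_p) : 'M[R]_p :=
  (n%:R)^-1 *: \sum_(i < n)
     ((X i - sample_mean X) *m (X i - sample_mean X)^T).

Definition loglik (p r n : nat) (G0 : 'M[R]_p) (G : 'I_r -> 'M[R]_p)
  (S : 'M[R]_p) (v : 'I_r -> R) : R :=
  Rminus (Ropp (Rmult (Rdiv (INR n) 2) (ln (\det (Sigma G0 G v)))))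
         (Rmult (Rdiv (INR n) 2) (\tr (S *m invmx (Sigma G0 G v)))).

Definition convcomb (r : nat) (t : R) (v w : 'I_r -> R) : 'I_r -> R :=
  fun i => Rplus (Rmult t (v i)) (Rmult (Rminus 1 t) (w i)).

Definition convex_set (r : nat) (D : ('I_r -> R) -> Prop) : Prop :=
  forall v w t, D v -> D w -> Rle 0 t -> Rle t 1 -> D (convcomb t v w).

Definition strictly_concave_on (r : nat) (D : ('I_r -> R) -> Prop)
  (f : ('I_r -> R) -> R) : Prop :=
  forall v w t, D v -> D w -> v <> w -> Rlt 0 t -> Rlt t 1 ->
    Rlt (Rplus (Rmult t (f v)) (Rmult (Rminus 1 t) (f w)))
        (f (convcomb t v w)).

(* Along a segment [Sigma(s) = Sigma_w + s D], [D = Sigma_v - Sigma_w], of Delta_2S the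
   log-likelihood has second derivative [(n/2) (tr (N D N D) - 2 tr (S N D N D N))] with
   [N = Sigma(s)^-1].  For [F = N D N] this is [-(n/2) tr ((2S - Sigma(s)) F Sigma(s) F)], and
   writing [Sigma(s) = L^T L] it is [-(n/2) tr (Y^T (2S - Sigma(s)) Y)] with [Y = F L^T]: negative,
   since [2S - Sigma(s)] is positive definite and [D <> 0] by linear independence of the [G_i].
   A negative second derivative on [0, 1] gives strict concavity by the mean value theorem.
   Delta_2S is convex because both of its Loewner constraints are. *)

From Stdlib Require Import Reals Lra Psatz FunctionalExtensionality.
From HB Require Import structures.
From mathcomp Require Import all_boot all_order all_algebra zify.

Set Implicit Arguments.
Unset Strict Implicit.
Unset Printing Implicit Defensive.
Import GRing.Theory.
Local Open Scope ring_scope.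

Lemma RaddE (x y : R) : x + y = Rplus x y. Proof. by []. Qed.
Lemma RmulE (x y : R) : x * y = Rmult x y. Proof. by []. Qed.
Lemma RoppE (x : R) : - x = Ropp x. Proof. by []. Qed.
Lemma RinvE (x : R) : x^-1 = Rinv x. Proof. by []. Qed.
Lemma R0E : 0 = R0 :> R. Proof. by []. Qed.
Lemma R1E : 1 = R1 :> R. Proof. by []. Qed.

(* Exposes the Stdlib operations behind the ring notations, for [lra]/[nra]. *)
Ltac to_Rops := rewrite ?RaddE ?RmulE ?RoppE ?RinvE ?R0E ?R1E;
  try match goal with |- ?a = ?b => change (@eq R a b) end.

Section RealDerivatives.
Implicit Types (f g : R -> R) (x a b c : R).

Lemma derivable_pt_limD f g x a b :
  derivable_pt_lim f x a -> derivable_pt_lim g x b ->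
  derivable_pt_lim (fun y => f y + g y) x (a + b).
Proof. exact: derivable_pt_lim_plus. Qed.

Lemma derivable_pt_limN f x a :
  derivable_pt_lim f x a -> derivable_pt_lim (fun y => - f y) x (- a).
Proof. exact: derivable_pt_lim_opp. Qed.

Lemma derivable_pt_limB f g x a b :
  derivable_pt_lim f x a -> derivable_pt_lim g x b ->
  derivable_pt_lim (fun y => f y - g y) x (a - b).
Proof. by move=> fa gb; apply: derivable_pt_limD fa (derivable_pt_limN gb). Qed.

Lemma derivable_pt_limM f g x a b :
  derivable_pt_lim f x a -> derivable_pt_lim g x b ->
  derivable_pt_lim (fun y => f y * g y) x (a * g x + f x * b).
Proof. exact: derivable_pt_lim_mult. Qed.

Lemma derivable_pt_limZ c f x a :
  derivable_pt_lim f x a -> derivable_pt_lim (fun y => c * f y) x (c * a).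
Proof.
move=> fa; have := derivable_pt_limM (derivable_pt_lim_const c x) fa.
by rewrite mul0r add0r.
Qed.

Lemma derivable_pt_limV f x a : derivable_pt_lim f x a -> f x <> 0 ->
  derivable_pt_lim (fun y => (f y)^-1) x (- a / (f x * f x)).
Proof.
move=> fa fx0; have := derivable_pt_lim_div _ _ _ _ _ (derivable_pt_lim_const 1 x) fa fx0.
have -> : Rdiv (Rminus (Rmult 0 (f x)) (Rmult a 1)) (Rsqr (f x)) = - a / (f x * f x).
  by rewrite /Rsqr /Rdiv; to_Rops; field.
by apply: derivable_pt_lim_ext => y; rewrite /div_fct /fct_cte /Rdiv; to_Rops; ring.
Qed.

Lemma derivable_pt_lim_sum (I : Type) (s : seq I) (F : I -> R -> R) (F' : I -> R) x :
  (forall i, derivable_pt_lim (F i) x (F' i)) ->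
  derivable_pt_lim (fun y => \sum_(i <- s) F i y) x (\sum_(i <- s) F' i).
Proof.
move=> dF; elim: s => [|i s IHs].
  rewrite big_nil; apply: derivable_pt_lim_ext (derivable_pt_lim_const 0 x) => y.
  by rewrite big_nil.
rewrite big_cons; apply: derivable_pt_lim_ext (derivable_pt_limD (dF i) IHs) => y.
by rewrite big_cons.
Qed.

Lemma derivable_pt_lim_horner (q : {poly R}) x :
  derivable_pt_lim (fun y => q.[y]) x (q^`().[x]).
Proof.
elim/poly_ind: q => [|q c IHq].
  rewrite deriv0 horner0; apply: derivable_pt_lim_ext (derivable_pt_lim_const 0 x) => y.
  by rewrite horner0.
rewrite derivMXaddC hornerD hornerM hornerX.
have := derivable_pt_limD (derivable_pt_limM IHq (derivable_pt_lim_id x))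
                          (derivable_pt_lim_const c x).
rewrite mulr1 addr0 addrC; apply: derivable_pt_lim_ext => y.
by rewrite hornerMXaddC.
Qed.

End RealDerivatives.

Section StrictConcavity.
Local Open Scope R_scope.

Lemma deriv2_neg_strict_concave (f f' f'' : R -> R) t :
  (forall c, 0 <= c <= 1 -> derivable_pt_lim f c (f' c)) ->
  (forall c, 0 <= c <= 1 -> derivable_pt_lim f' c (f'' c)) ->
  (forall c, 0 <= c <= 1 -> f'' c < 0) ->
  0 < t < 1 -> t * f 1 + (1 - t) * f 0 < f t.
Proof.
move=> df df' f''_neg [t_gt0 t_lt1].
have [c1 [mvt1 c1_in]] := MVT_cor2 f f' 0 t t_gt0 (fun c hc => df c ltac:(lra)).
have [c2 [mvt2 c2_in]] := MVT_cor2 f f' t 1 t_lt1 (fun c hc => df c ltac:(lra)).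
have [c3 [mvt3 c3_in]] := MVT_cor2 f' f'' c1 c2 ltac:(lra) (fun c hc => df' c ltac:(lra)).
have f'_decr : f' c2 < f' c1 by have := f''_neg c3 ltac:(lra); nra.
(* [t f(1) + (1 - t) f(0) - f(t) = t (1 - t) (f'(c2) - f'(c1))] *)
have := Rmult_lt_compat_l (t * (1 - t)) _ _ ltac:(nra) f'_decr.
nra.
Qed.

End StrictConcavity.

Definition mxderivable_pt_lim m n (F : R -> 'M[R]_(m, n)) x (F' : 'M[R]_(m, n)) :=
  forall i j, derivable_pt_lim (fun y => F y i j) x (F' i j).

Section MatrixDerivatives.
Variables (m n : nat) (x : R).

Lemma mxderivable_pt_lim_ext (F G : R -> 'M[R]_(m, n)) F' : (forall y, F y = G y) ->
  mxderivable_pt_lim F x F' -> mxderivable_pt_lim G x F'.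
Proof. by move=> FG dF i j; apply: derivable_pt_lim_ext (dF i j) => y; rewrite FG. Qed.

Lemma mxderivable_pt_lim_unique (F : R -> 'M[R]_(m, n)) F'1 F'2 :
  mxderivable_pt_lim F x F'1 -> mxderivable_pt_lim F x F'2 -> F'1 = F'2.
Proof.
by move=> dF1 dF2; apply/matrixP => i j; apply: uniqueness_limite (dF1 i j) (dF2 i j).
Qed.

Lemma mxderivable_pt_lim_const (A : 'M[R]_(m, n)) :
  mxderivable_pt_lim (fun=> A) x 0.
Proof. by move=> i j; rewrite mxE; apply: derivable_pt_lim_const. Qed.

Lemma mxderivable_pt_limZ (f : R -> R) a (F : R -> 'M[R]_(m, n)) F' :
  derivable_pt_lim f x a -> mxderivable_pt_lim F x F' ->
  mxderivable_pt_lim (fun y => f y *: F y) x (a *: F x + f x *: F').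
Proof.
move=> df dF i j; rewrite !mxE.
by apply: derivable_pt_lim_ext (derivable_pt_limM df (dF i j)) => y; rewrite mxE.
Qed.

Lemma mxderivable_pt_lim_mul k (F : R -> 'M[R]_(m, n)) (G : R -> 'M[R]_(n, k)) F' G' :
  mxderivable_pt_lim F x F' -> mxderivable_pt_lim G x G' ->
  mxderivable_pt_lim (fun y => F y *m G y) x (F' *m G x + F x *m G').
Proof.
move=> dF dG i j; rewrite !mxE -big_split /=.
have := derivable_pt_lim_sum (index_enum 'I_n) (fun l => derivable_pt_limM (dF i l) (dG l j)).
by apply: derivable_pt_lim_ext => y; rewrite mxE.
Qed.

End MatrixDerivatives.

Lemma mxderivable_pt_lim_trace n (F : R -> 'M[R]_n) x F' :
  mxderivable_pt_lim F x F' -> derivable_pt_lim (fun y => \tr (F y)) x (\tr F').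
Proof. by move=> dF; apply: derivable_pt_lim_sum => i; apply: dF. Qed.

Lemma mxderivable_pt_lim_scalar n (f : R -> R) x a : derivable_pt_lim f x a ->
  mxderivable_pt_lim (fun y => (f y)%:M : 'M[R]_n) x a%:M.
Proof.
move=> df i j; rewrite mxE; have [<-|ne_ij] := eqVneq i j.
  by apply: derivable_pt_lim_ext df => y; rewrite mxE eqxx.
by apply: derivable_pt_lim_ext (derivable_pt_lim_const 0 x) => y; rewrite mxE (negbTE ne_ij).
Qed.

Lemma mxderivable_pt_lim_line n (B D : 'M[R]_n) x :
  mxderivable_pt_lim (fun s => B + s *: D) x D.
Proof.
move=> i j; have := derivable_pt_limD (derivable_pt_lim_const (B i j) x)
  (derivable_pt_limM (derivable_pt_lim_id x) (derivable_pt_lim_const (D i j) x)).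
rewrite add0r mulr0 addr0 mul1r; apply: derivable_pt_lim_ext => y.
by rewrite !mxE.
Qed.

Lemma horner_char_poly n (A : 'M[R]_n) x : (char_poly A).[x] = \det (x%:M - A).
Proof.
rewrite /char_poly -horner_evalE -det_map_mx; congr (\det _); apply/matrixP => i j.
by rewrite !mxE /= horner_evalE hornerD hornerN hornerMn hornerX hornerC.
Qed.

(* [Q] is the reversed characteristic polynomial of [- M]. *)
Lemma det_1addZ_poly n (M : 'M[R]_n) : exists Q : {poly R},
  (forall h, \det (1%:M + h *: M) = Q.[h]) /\ Q`_1 = \tr M.
Proof.
set K := char_poly (- M).
have size_K : size K = n.+1 by rewrite size_char_poly.
have K_n : K`_n = 1.
  by have := monicP (char_poly_monic (- M)); rewrite lead_coefE size_K.
exists (\sum_(j < n.+1) K`_j *: 'X^(n - j)); split.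
  move=> h; rewrite horner_sum.
  under eq_bigr do rewrite hornerZ hornerXn.
  have [->|h_neq0] := eqVneq h 0.
    rewrite scale0r addr0 det1 big_ord_recr /= subnn expr0 mulr1 K_n big1 ?add0r //.
    by move=> [j lt_jn] _ /=; rewrite expr0n /= subn_eq0 leqNgt lt_jn mulr0.
  have -> : 1%:M + h *: M = h *: (h^-1%:M - - M).
    by rewrite scalerDr opprK scale_scalar_mx mulfV.
  rewrite detZ -horner_char_poly horner_coef size_K mulr_sumr.
  apply: eq_bigr => [[j lt_jn]] _ /=.
  by rewrite exprVn exprB ?unitfE // mulrCA.
rewrite coef_sum.
under eq_bigr do rewrite coefZ coefXn.
have K_tr : (0 < n)%N -> K`_n.-1 = \tr M.
  by move=> n_gt0; rewrite /K char_poly_trace // raddfN opprK.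
clearbody K; case: n M K size_K K_n K_tr => [|n] M K _ _ K_tr.
  by rewrite big_ord1 /= mulr0 /mxtrace big_ord0.
rewrite big_ord_recr /= subnn /= mulr0 addr0 big_ord_recr /= subSnn /= mulr1.
rewrite big1 ?add0r; first exact: K_tr.
move=> [j lt_jn] _ /=; suff /negbTE -> : (1 != n.+1 - j)%N by rewrite mulr0.
by apply/eqP; lia.
Qed.

Lemma derivable_pt_lim_det_line n (B D : 'M[R]_n) t : B + t *: D \in unitmx ->
  derivable_pt_lim (fun s => \det (B + s *: D)) t
    (\det (B + t *: D) * \tr (invmx (B + t *: D) *m D)).
Proof.
set C := B + t *: D => C_unit.
have [Q [det_Q Q_1]] := det_1addZ_poly (invmx C *m D).
have det_line s : \det C * (Q \Po ('X - t%:P)).[s] = \det (B + s *: D).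
  rewrite horner_comp hornerXsubC -det_Q -det_mulmx.
  rewrite mulmxDr mulmx1 -scalemxAr mulmxA mulmxV // mul1mx /C scalerBl.
  by rewrite -addrA (addrC (t *: D)) addrNK.
have := derivable_pt_limZ (\det C) (derivable_pt_lim_horner (Q \Po ('X - t%:P)) t).
rewrite deriv_comp derivXsubC mulr1 horner_comp hornerXsubC subrr horner_coef0.
by rewrite coef_deriv Q_1; apply: derivable_pt_lim_ext.
Qed.

Lemma mxderivable_adj_line n (B D : 'M[R]_n) t :
  exists A', mxderivable_pt_lim (fun s => \adj (B + s *: D)) t A'.
Proof.
pose P : 'M[{poly R}]_n := map_mx polyC B + 'X *: map_mx polyC D.
have P_eval s : map_mx (horner_eval s) P = B + s *: D.
  apply/matrixP => i j; rewrite !mxE /= horner_evalE hornerD hornerC.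
  by rewrite hornerM hornerX hornerC.
exists (map_mx (fun q => q^`().[t]) (\adj P)) => i j; rewrite mxE.
apply: derivable_pt_lim_ext (derivable_pt_lim_horner (\adj P i j) t) => y.
by rewrite -P_eval -map_mx_adj [RHS]mxE /= horner_evalE.
Qed.

(* Unlike [invmx], which branches on invertibility, this is a rational function of [s]
   and hence derivable wherever the determinant does not vanish. *)
Definition line_inv n (B D : 'M[R]_n) (s : R) : 'M[R]_n :=
  (\det (B + s *: D))^-1 *: \adj (B + s *: D).

Lemma line_invE n (B D : 'M[R]_n) s :
  B + s *: D \in unitmx -> line_inv B D s = invmx (B + s *: D).
Proof. by move=> C_unit; rewrite /invmx C_unit. Qed.

Lemma mxderivable_pt_lim_line_inv n (B D : 'M[R]_n) t : B + t *: D \in unitmx ->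
  mxderivable_pt_lim (line_inv B D) t
    (- (invmx (B + t *: D) *m D *m invmx (B + t *: D))).
Proof.
set C := B + t *: D; set N := invmx C; set d := \det C => C_unit.
have d_neq0 : d != 0 by rewrite -unitfE -unitmxE.
have ddet := derivable_pt_lim_det_line C_unit; rewrite -/C -/N -/d in ddet.
set d' := d * \tr (N *m D) in ddet.
have [A' dadj] := mxderivable_adj_line B D t.
(* Differentiating [adj C(s) * C(s) = det C(s) 1] gives [A'] in terms of [N]. *)
have A'E : A' *m C + \adj C *m D = d'%:M.
  apply: (mxderivable_pt_lim_unique (F := fun s => \adj (B + s *: D) *m (B + s *: D))).
    exact: mxderivable_pt_lim_mul dadj (mxderivable_pt_lim_line B D t).
  apply: mxderivable_pt_lim_ext (mxderivable_pt_lim_scalar (n := n) ddet) => s.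
  by rewrite mul_adj_mx.
have adjC : \adj C = d *: N by rewrite /N /invmx C_unit scalerA mulfV // scale1r.
have := mxderivable_pt_limZ (derivable_pt_limV ddet (elimN eqP d_neq0)) dadj.
suff -> : (- d' / (d * d)) *: \adj C + d^-1 *: A' = - (N *m D *m N) by [].
have -> : A' = (d'%:M - \adj C *m D) *m N.
  by rewrite -A'E addrK -mulmxA mulmxV // mulmx1.
rewrite adjC mulmxBl mul_scalar_mx -!scalemxAl scalerBr !scalerA mulVf // scale1r.
have -> : - d' / (d * d) * d = - (d^-1 * d') by to_Rops; field; apply/eqP.
by rewrite scaleNr addKr.
Qed.

Lemma quadformD p (A B : 'M[R]_p) x : quadform (A + B) x = quadform A x + quadform B x.
Proof. by rewrite /quadform mulmxDr mulmxDl mxE. Qed.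

Lemma quadformZ p a (A : 'M[R]_p) x : quadform (a *: A) x = a * quadform A x.
Proof. by rewrite /quadform -scalemxAr -scalemxAl mxE. Qed.

Lemma quadform_congr p (E C : 'M[R]_p) x : quadform (E^T *m C *m E) x = quadform C (E *m x).
Proof. by rewrite /quadform trmx_mul !mulmxA. Qed.

Lemma quadform_ge0 p (C : 'M[R]_p) x : posdef C -> Rle 0 (quadform C x).
Proof.
move=> [_ C_pos]; have [->|x_neq0] := eqVneq x 0.
  by rewrite /quadform mulmx0 mxE; apply: Rle_refl.
by apply/Rlt_le/C_pos/eqP.
Qed.

Lemma posdef_conv p (A B : 'M[R]_p) t : posdef A -> posdef B -> Rle 0 t -> Rle t 1 ->
  posdef (t *: A + (1 - t) *: B).
Proof.
move=> [A_sym A_pos] [B_sym B_pos] t_ge0 t_le1; split.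
  by rewrite linearD !linearZ /= A_sym B_sym.
move=> x x_neq0; rewrite quadformD !quadformZ.
by have := A_pos x x_neq0; have := B_pos x x_neq0; to_Rops; nra.
Qed.

Lemma posdef_congr p (E C : 'M[R]_p) : E \in unitmx -> posdef C -> posdef (E^T *m C *m E).
Proof.
move=> E_unit [C_sym C_pos]; split; first by rewrite !trmx_mul trmxK C_sym mulmxA.
move=> x x_neq0; rewrite quadform_congr; apply: C_pos => Ex0; apply: x_neq0.
by rewrite -(mulKmx E_unit x) Ex0 mulmx0.
Qed.

Section PrincipalBlocks.
Variables (m n : nat) (C : 'M[R]_(m + n)).

Lemma quadform_col_mx0 (x : 'cV[R]_m) :
  quadform C (col_mx x 0) = quadform (ulsubmx C) x.
Proof.
rewrite /quadform -[in LHS](submxK C) tr_col_mx trmx0 mul_row_block.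
by rewrite !mul0mx !addr0 mul_row_col mulmx0 addr0.
Qed.

Lemma quadform_col_0mx (y : 'cV[R]_n) :
  quadform C (col_mx 0 y) = quadform (drsubmx C) y.
Proof.
rewrite /quadform -[in LHS](submxK C) tr_col_mx trmx0 mul_row_block.
by rewrite !mul0mx !add0r mul_row_col mulmx0 add0r.
Qed.

Lemma posdef_ulsub : posdef C -> posdef (ulsubmx C).
Proof.
move=> [C_sym C_pos]; split; first by rewrite trmx_ulsub C_sym.
move=> x x_neq0; rewrite -quadform_col_mx0; apply: C_pos.
by move/eqP; rewrite col_mx_eq0 => /andP[/eqP].
Qed.

Lemma posdef_drsub : posdef C -> posdef (drsubmx C).
Proof.
move=> [C_sym C_pos]; split; first by rewrite trmx_drsub C_sym.
move=> y y_neq0; rewrite -quadform_col_0mx; apply: C_pos.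
by move/eqP; rewrite col_mx_eq0 => /andP[_ /eqP].
Qed.

End PrincipalBlocks.

Section SchurComplement.
Variables (p : nat) (C : 'M[R]_(1 + p)).
Let a := ulsubmx C 0 0.
Let c := dlsubmx C.

Definition schur_elim : 'M[R]_(1 + p) := block_mx 1%:M (- a^-1 *: c^T) 0 1%:M.

Definition schur_compl : 'M[R]_p := drsubmx C - a^-1 *: (c *m c^T).

Lemma schur_elim_unit : schur_elim \in unitmx.
Proof. by rewrite unitmxE det_ublock !det1 mulr1 unitr1. Qed.

Lemma schur_elim_congr : C^T = C -> a != 0 ->
  schur_elim^T *m C *m schur_elim = block_mx a%:M 0 0 schur_compl.
Proof.
move=> C_sym a_neq0.
have urC : ursubmx C = c^T by rewrite /c trmx_dlsub C_sym.
have CE : C = block_mx a%:M c^T c (drsubmx C) by rewrite -mx11_scalar -urC submxK.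
rewrite [in LHS]CE /schur_elim tr_block_mx !trmx1 trmx0 linearZ /= trmxK !mulmx_block.
rewrite !mul1mx !mulmx1 !mul0mx !mulmx0 !addr0 ?add0r.
have -> : a%:M *m (- a^-1 *: c^T) + c^T = 0.
  by rewrite mul_scalar_mx scalerA mulrN mulfV // scaleN1r addNr.
have -> : (- a^-1 *: c) *m a%:M + c = 0.
  by rewrite mul_mx_scalar scalerA mulrN mulfV // scaleN1r addNr.
by rewrite mul0mx add0r /schur_compl -scalemxAl scaleNr addrC.
Qed.

End SchurComplement.

(* Cholesky factorisation, through the Schur complement. *)
Lemma posdef_gram p (C : 'M[R]_p) : posdef C -> exists L, L \in unitmx /\ C = L^T *m L.
Proof.
elim: p C => [|p IHp] C C_pd.
  by exists 1%:M; split; [rewrite unitmx1 | apply/matrixP => -[]].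
move: C C_pd; rewrite -[p.+1]/(1 + p)%N => C C_pd.
set a := ulsubmx C 0 0.
have a_gt0 : Rlt 0 a.
  have [_ /(_ 1%:M) pos] := posdef_ulsub C_pd.
  rewrite /quadform trmx1 mul1mx mulmx1 in pos; apply: pos.
  by move/matrixP/(_ 0 0); rewrite !mxE /= => /eqP; rewrite oner_eq0.
have blk_pd := posdef_congr (schur_elim_unit C) C_pd.
have [C_sym _] := C_pd.
have a_neq0 : a != 0 by apply/eqP/Rgt_not_eq.
rewrite schur_elim_congr // in blk_pd.
have := posdef_drsub blk_pd; rewrite block_mxKdr => /IHp[L2 [L2_unit S_gram]].
pose L0 : 'M[R]_(1 + p) := block_mx (sqrt a)%:M 0 0 L2.
have L0_gram : L0^T *m L0 = block_mx a%:M 0 0 (schur_compl C).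
  rewrite /L0 tr_block_mx trmx0 tr_scalar_mx mulmx_block.
  rewrite !mul0mx !mulmx0 !addr0 !add0r mul_scalar_mx scale_scalar_mx -S_gram.
  rewrite trmx0 mul0mx; congr (block_mx _%:M _ _ _).
  exact: sqrt_sqrt (Rlt_le _ _ a_gt0).
exists (L0 *m invmx (schur_elim C)); split.
  rewrite unitmx_mul unitmx_inv schur_elim_unit andbT unitmxE det_ublock det_scalar1.
  rewrite unitfE mulf_neq0 -?unitfE -?unitmxE //.
  exact/eqP/Rgt_not_eq/sqrt_lt_R0.
rewrite trmx_mul -mulmxA (mulmxA L0^T) L0_gram -schur_elim_congr //.
by rewrite mulmxK ?schur_elim_unit // !mulmxA -trmx_mul mulmxV ?schur_elim_unit // trmx1 mul1mx.
Qed.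

Lemma posdef_unitmx p (C : 'M[R]_p) : posdef C -> C \in unitmx.
Proof. by move=> /posdef_gram[L [L_unit ->]]; rewrite unitmx_mul unitmx_tr L_unit. Qed.

Lemma posdef_det_gt0 p (C : 'M[R]_p) : posdef C -> Rlt 0 (\det C).
Proof.
move=> /posdef_gram[L [L_unit ->]]; rewrite det_mulmx det_tr.
have /eqP detL_neq0 : \det L != 0 by rewrite -unitfE -unitmxE.
exact: Rsqr_pos_lt.
Qed.

Lemma mx_neq0_col m n (Y : 'M[R]_(m, n)) : Y != 0 -> exists k, col k Y != 0.
Proof.
move=> Y_neq0; apply/existsP; move: Y_neq0; apply: contraR.
rewrite negb_exists => /forallP Y0; apply/eqP/matrixP => i j.
by move: (Y0 j); rewrite negbK => /eqP /matrixP /(_ i 0); rewrite !mxE.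
Qed.

Lemma mxtrace_congr_gt0 p (P Y : 'M[R]_p) : posdef P -> Y != 0 ->
  Rlt 0 (\tr (Y^T *m P *m Y)).
Proof.
move=> P_pd Y_neq0.
have diagE k : (Y^T *m P *m Y) k k = quadform P (col k Y).
  rewrite /quadform tr_col -row_mul !mxE.
  by apply: eq_bigr => l _; rewrite !mxE.
have [k colk_neq0] := mx_neq0_col Y_neq0.
rewrite /mxtrace (bigD1 k) //= diagE.
apply: Rplus_lt_le_0_compat; first by case: P_pd => _; apply; apply/eqP.
apply: (big_ind (fun x : R => Rle 0 x)); [exact: Rle_refl | | ].
  by move=> x y x_ge0 y_ge0; to_Rops; lra.
by move=> i _; rewrite diagE; apply: quadform_ge0.
Qed.

Lemma mxtrace_sandwich_gt0 p (P C F : 'M[R]_p) :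
  posdef P -> posdef C -> F^T = F -> F != 0 -> Rlt 0 (\tr (P *m (F *m C *m F))).
Proof.
move=> P_pd C_pd F_sym F_neq0; have [L [L_unit ->]] := posdef_gram C_pd.
have -> : P *m (F *m (L^T *m L) *m F) = P *m (F *m L^T) *m (F *m L^T)^T.
  by rewrite trmx_mul trmxK F_sym !mulmxA.
rewrite mxtrace_mulC [_^T *m _]mulmxA; apply: mxtrace_congr_gt0 => //.
have LT_unit : L^T \in unitmx by rewrite unitmx_tr.
by apply: contra_neq F_neq0 => FL0; rewrite -(mulmxK LT_unit F) FL0 mul0mx.
Qed.

Lemma tr_invmx_quad_lt p (C S D : 'M[R]_p) :
  posdef C -> posdef (2%:R *: S - C) -> D^T = D -> D != 0 ->
  Rlt (\tr (invmx C *m D *m invmx C *m D))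
      (2%:R * \tr (S *m invmx C *m D *m invmx C *m D *m invmx C)).
Proof.
move=> C_pd P_pd D_sym D_neq0.
have C_unit := posdef_unitmx C_pd.
set N := invmx C.
have N_sym : N^T = N by rewrite /N trmx_inv; case: C_pd => ->.
have F_sym : (N *m D *m N)^T = N *m D *m N by rewrite !trmx_mul N_sym D_sym mulmxA.
have F_neq0 : N *m D *m N != 0.
  apply: contra_neq D_neq0 => F0.
  have -> : D = C *m (N *m D *m N) *m C by rewrite !mulmxA mulmxV // mul1mx mulmxKV.
  by rewrite F0 mulmx0 mul0mx.
have FCF : N *m D *m N *m D *m N = N *m D *m N *m C *m (N *m D *m N).
  by rewrite !mulmxA -(mulmxA _ N C) mulVmx // mulmx1.
have := mxtrace_sandwich_gt0 P_pd C_pd F_sym F_neq0.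
rewrite -FCF mulmxBl mxtraceD raddfN /= -scalemxAl mxtraceZ.
rewrite [\tr (C *m _)]mxtrace_mulC !mulmxA -(mulmxA _ N C) mulVmx // mulmx1.
set a := \tr (N *m D *m N *m D); set b := \tr (S *m N *m D *m N *m D *m N).
by rewrite -[2%:R]/(1 + 1 : R); to_Rops => gap_gt0; lra.
Qed.

Section LoglikOnSegment.
Variables (p : nat) (k : R) (S B D : 'M[R]_p).

Definition loglik_line (s : R) : R :=
  - (k * ln (\det (B + s *: D))) - k * \tr (S *m line_inv B D s).

Definition loglik_line_deriv (s : R) : R :=
  - (k * \tr (line_inv B D s *m D)) + k * \tr (S *m (line_inv B D s *m D *m line_inv B D s)).

Definition loglik_line_deriv2 (s : R) : R :=
  let N := invmx (B + s *: D) in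
  k * (\tr (N *m D *m N *m D) - 2%:R * \tr (S *m N *m D *m N *m D *m N)).

Lemma derivable_pt_lim_loglik_line s : posdef (B + s *: D) ->
  derivable_pt_lim loglik_line s (loglik_line_deriv s).
Proof.
move=> C_pd; have C_unit := posdef_unitmx C_pd; have det_gt0 := posdef_det_gt0 C_pd.
have dlogdet := derivable_pt_lim_comp _ ln s _ _ (derivable_pt_lim_det_line C_unit)
  (derivable_pt_lim_ln _ det_gt0).
have dtr := mxderivable_pt_lim_trace (mxderivable_pt_lim_mul
  (mxderivable_pt_lim_const s S) (mxderivable_pt_lim_line_inv C_unit)).
have := derivable_pt_limB (derivable_pt_limN (derivable_pt_limZ k dlogdet))
  (derivable_pt_limZ k dtr).
congr derivable_pt_lim.
rewrite /loglik_line_deriv line_invE // mul0mx add0r mulmxN raddfN /= !mulmxA.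
move: (Rgt_not_eq _ _ det_gt0).
move: (\det _) (\tr (invmx _ *m D)) (\tr (S *m _ *m D *m _)) => d a b d_neq0.
by to_Rops; field.
Qed.

Lemma derivable_pt_lim_loglik_line_deriv s : posdef (B + s *: D) ->
  derivable_pt_lim loglik_line_deriv s (loglik_line_deriv2 s).
Proof.
move=> C_pd; rewrite /loglik_line_deriv2; set N := invmx _; have C_unit := posdef_unitmx C_pd.
have dN := mxderivable_pt_lim_line_inv C_unit.
have dND := mxderivable_pt_lim_mul dN (mxderivable_pt_lim_const s D).
have dSNDN := mxderivable_pt_lim_mul (mxderivable_pt_lim_const s S)
  (mxderivable_pt_lim_mul dND dN).
have := derivable_pt_limD (derivable_pt_limN (derivable_pt_limZ k (mxderivable_pt_lim_trace dND)))
  (derivable_pt_limZ k (mxderivable_pt_lim_trace dSNDN)).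
congr derivable_pt_lim.
rewrite line_invE // -/N mulmx0 addr0 mul0mx add0r !mulNmx !mulmxN mulmxDr mxtraceD !raddfN /=.
rewrite !mulmxA -[2%:R]/(1 + 1 : R).
move: (\tr (N *m D *m N *m D)) (\tr (S *m N *m D *m N *m D *m N)) => a b.
by to_Rops; ring.
Qed.

Lemma loglik_line_strict_concave t : Rlt 0 k -> D^T = D -> D != 0 ->
  (forall s, Rle 0 s -> Rle s 1 -> posdef (B + s *: D) /\ posdef (2%:R *: S - (B + s *: D))) ->
  Rlt 0 t -> Rlt t 1 ->
  Rlt (t * loglik_line 1 + (1 - t) * loglik_line 0) (loglik_line t).
Proof.
move=> k_gt0 D_sym D_neq0 segment t_gt0 t_lt1.
apply: (deriv2_neg_strict_concave (f' := loglik_line_deriv) (f'' := loglik_line_deriv2)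
  _ _ _ (conj t_gt0 t_lt1)).
- move=> c [c_ge0 c_le1].
  exact/derivable_pt_lim_loglik_line/(proj1 (segment c c_ge0 c_le1)).
- move=> c [c_ge0 c_le1].
  exact/derivable_pt_lim_loglik_line_deriv/(proj1 (segment c c_ge0 c_le1)).
move=> c [c_ge0 c_le1]; have [C_pd P_pd] := segment c c_ge0 c_le1.
have := tr_invmx_quad_lt C_pd P_pd D_sym D_neq0; rewrite /loglik_line_deriv2.
set a := \tr _; set b := \tr _.
by rewrite -[2%:R]/(1 + 1 : R); to_Rops => ab; nra.
Qed.

End LoglikOnSegment.

Lemma Sigma_convcomb p r (G0 : 'M[R]_p) (G : 'I_r -> 'M[R]_p) v w t :
  Sigma G0 G (convcomb t v w) = t *: Sigma G0 G v + (1 - t) *: Sigma G0 G w.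
Proof.
rewrite /Sigma /convcomb !scalerDr !scaler_sumr.
have -> : \sum_(i < r) (Rplus (Rmult t (v i)) (Rmult (Rminus 1 t) (w i))) *: G i =
    \sum_(i < r) t *: (v i *: G i) + \sum_(i < r) (1 - t) *: (w i *: G i).
  by rewrite -big_split; apply: eq_bigr => i _; rewrite [LHS]scalerDl !scalerA.
have {1}-> : G0 = t *: G0 + (1 - t) *: G0 by rewrite -scalerDl addrCA subrr addr0 scale1r.
by rewrite -!addrA; congr (_ + _); rewrite addrCA.
Qed.

Lemma Delta2S_convex p r (G0 : 'M[R]_p) (G : 'I_r -> 'M[R]_p) S :
  convex_set (Delta2S G0 G S).
Proof.
move=> v w t [v_pd [_ v_lt]] [w_pd [_ w_lt]] t_ge0 t_le1.
have conv_pd := posdef_conv v_pd w_pd t_ge0 t_le1.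
rewrite /Delta2S /Theta /loewner_lt Sigma_convcomb subr0.
split; [exact: conv_pd | split; first exact: conv_pd].
have -> : 2%:R *: S - (t *: Sigma G0 G v + (1 - t) *: Sigma G0 G w) =
    t *: (2%:R *: S - Sigma G0 G v) + (1 - t) *: (2%:R *: S - Sigma G0 G w).
  by rewrite !scalerBr addrACA -scalerDl (addrC t) subrK scale1r opprD.
exact: posdef_conv.
Qed.

Lemma Sigma_inj p r (G0 : 'M[R]_p) (G : 'I_r -> 'M[R]_p) :
  (forall c : 'I_r -> R, \sum_(i < r) c i *: G i = 0 -> forall i, c i = 0) ->
  injective (Sigma G0 G).
Proof.
move=> G_indep v w eq_vw; apply: functional_extensionality => i.
apply/eqP; rewrite -subr_eq0; apply/eqP; apply: (G_indep (fun i => v i - w i)).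
under eq_bigr do rewrite scalerBl.
by move: eq_vw => /addrI eq_vw; rewrite big_split /= sumrN eq_vw subrr.
Qed.

Lemma sample_cov_n_gt0 p n (X : 'I_n -> 'cV[R]_p) (x : 'cV[R]_p) :
  x != 0 -> posdef (sample_cov X) -> (0 < n)%N.
Proof.
case: n X => // X /eqP x_neq0 [_ /(_ x x_neq0)].
by rewrite /sample_cov big_ord0 scaler0 /quadform mulmx0 mul0mx mxE => /Rlt_irrefl.
Qed.

Lemma loglik_lineE p r n (G0 : 'M[R]_p) (G : 'I_r -> 'M[R]_p) S u B D s :
  Sigma G0 G u = B + s *: D -> posdef (B + s *: D) ->
  loglik n G0 G S u = loglik_line (INR n / 2) S B D s.
Proof.
by move=> SigmaE C_pd; rewrite /loglik /loglik_line SigmaE line_invE ?posdef_unitmx.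
Qed.

Theorem mainTheorem2 (p r n : nat) (G0 : 'M[R]_p) (G : 'I_r -> 'M[R]_p)
  (X : 'I_n -> 'cV[R]_p)
  (hG0sym : (G0^T)%R = G0)
  (hGsym : forall i, ((G i)^T)%R = G i)
  (hGindep : forall c : 'I_r -> R,
      (\sum_(i < r) c i *: G i)%R = 0%R -> forall i, c i = 0%R)
  (hGorth : forall i, (\tr (G0 *m G i))%R = 0%R)
  (hTheta : exists v, Theta G0 G v)
  (hS : posdef (sample_cov X)) :
  convex_set (Delta2S G0 G (sample_cov X)) /\
  strictly_concave_on (Delta2S G0 G (sample_cov X))
    (loglik n G0 G (sample_cov X)).
Proof.
split; first exact: Delta2S_convex.
move=> v w t v_in w_in v_neq_w t_gt0 t_lt1.
pose B := Sigma G0 G w; pose D := Sigma G0 G v - Sigma G0 G w.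
have SigmaE s : Sigma G0 G (convcomb s v w) = B + s *: D.
  by rewrite Sigma_convcomb /D scalerBr scalerBl scale1r addrCA.
have segment s : Rle 0 s -> Rle s 1 ->
    posdef (B + s *: D) /\ posdef (2%:R *: sample_cov X - (B + s *: D)).
  by move=> s_ge0 s_le1; have [C_pd [_]] := Delta2S_convex v_in w_in s_ge0 s_le1; rewrite -SigmaE.
have D_sym : D^T = D.
  by case: v_in => -[v_sym _] _; case: w_in => -[w_sym _] _; rewrite /D linearB /= v_sym w_sym.
have D_neq0 : D != 0.
  by apply: contra_not_neq v_neq_w => /eqP; rewrite subr_eq0 => /eqP /(Sigma_inj hGindep).
have [j col_neq0] := mx_neq0_col D_neq0.
have k_gt0 : Rlt 0 (INR n / 2).
  by apply: Rdiv_lt_0_compat; [apply/lt_0_INR/ltP/(sample_cov_n_gt0 col_neq0 hS) | lra].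
have [C1_pd _] := segment 1 Rle_0_1 (Rle_refl 1).
have [C0_pd _] := segment 0 (Rle_refl 0) Rle_0_1.
have [Ct_pd _] := segment t (Rlt_le _ _ t_gt0) (Rlt_le _ _ t_lt1).
rewrite (loglik_lineE _ _ (SigmaE t) Ct_pd).
rewrite (loglik_lineE _ _ (_ : _ = B + 1 *: D) C1_pd); last by rewrite scale1r addrC subrK.
rewrite (loglik_lineE _ _ (_ : _ = B + 0 *: D) C0_pd); last by rewrite scale0r addr0.
exact: loglik_line_strict_concave k_gt0 D_sym D_neq0 segment t_gt0 t_lt1.
Qed.
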